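(* $\lambda_1$ is isolated: there exists $\delta>\lambda_1$ such that $\lambda_1$ is the unique eigenvalue of problem (B2) in $(0,\delta)$.
   Context: Let $N\ge1$ be an integer. Problem (B2) is: $\left((-v')^N\right)'=\lambda^N N r^{N-1}v^N$ in $(0,1)$, $v'(0)=v(1)=0$. A number $\lambda>0$ is an eigenvalue of (B2) if (B2) has a solution $v\in C^2[0,1]$, $v\not\equiv0$. $\lambda_1>0$ denotes the first eigenvalue of (B2), i.e. the unique $\lambda>0$ for which (B2) has a solution positive in $(0,1)$ (it is simple and no eigenvalue lies in $(0,\lambda_1)$). *)

From Stdlib Require Import Reals Lra Lia.
Open Scope R_scope.

Definition deriv01_at (f : R -> R) (x l : R) : Prop :=
  forall eps : R, 0 < eps -> exists delta : R, 0 < delta /\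
    forall h : R, h <> 0 -> Rabs h < delta -> 0 <= x + h <= 1 ->
      Rabs ((f (x + h) - f x) / h - l) < eps.

Definition cont01_at (f : R -> R) (x : R) : Prop :=
  forall eps : R, 0 < eps -> exists delta : R, 0 < delta /\
    forall y : R, 0 <= y <= 1 -> Rabs (y - x) < delta -> Rabs (f y - f x) < eps.

Definition C2_01 (v v1 v2 : R -> R) : Prop :=
  (forall x, 0 <= x <= 1 -> deriv01_at v x (v1 x)) /\
  (forall x, 0 <= x <= 1 -> deriv01_at v1 x (v2 x)) /\
  (forall x, 0 <= x <= 1 -> cont01_at v2 x).

Definition solves_B2 (N : nat) (lam : R) (v v1 : R -> R) : Prop :=
  (forall r, 0 < r < 1 ->
     derivable_pt_lim (fun s => (- v1 s) ^ N) r
       (lam ^ N * INR N * r ^ (N - 1) * (v r) ^ N)) /\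
  v1 0 = 0 /\ v 1 = 0.

Definition is_eigenvalue_B2 (N : nat) (lam : R) : Prop :=
  0 < lam /\
  exists v v1 v2 : R -> R, C2_01 v v1 v2 /\ solves_B2 N lam v v1 /\
    exists r, 0 <= r <= 1 /\ v r <> 0.

Definition is_first_eigenvalue_B2 (N : nat) (lam : R) : Prop :=
  0 < lam /\
  exists v v1 v2 : R -> R, C2_01 v v1 v2 /\ solves_B2 N lam v v1 /\
    forall r, 0 < r < 1 -> 0 < v r.

From Stdlib Require Import Reals Lra Lia Classical.
Open Scope R_scope.

(* The equation is invariant under v |-> a v and under the dilation
   v |-> v(c .), which turns a solution for lam into one for c^2 lam.
   Together with uniqueness for the initial value problem (an estimate on
   w - u by a contraction argument, propagated along [0,1] by a
   continuation principle) this gives: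
   - an eigenvalue lam < lam1 is impossible: v(c .) with c^2 = lam/lam1 and
     a suitably normalised eigenfunction for lam coincide, but v(c) > 0;
   - for an eigenvalue lam > lam1, the normalised eigenfunction w coincides
     with v(./c) on [0,c], c^2 = lam1/lam, so it vanishes at c with
     w'(c) <> 0 and again at 1; an a priori estimate then forces
     lam^N N (1 - c) > 1/4, which fails when lam is close to lam1. *)

(* Clamping to [a,b] extends a function controlled on [a,b] to all of R,
   so that the Stdlib theorems on globally defined functions apply. *)
Definition clamp (a b x : R) : R := Rmax a (Rmin b x).

Definition clamp_ext (g : R -> R) (a b : R) : R -> R := fun x => g (clamp a b x).

Lemma clamp_in a b x : a <= b -> a <= clamp a b x <= b.
Proof. intros; unfold clamp, Rmax, Rmin; repeat destruct Rle_dec; lra. Qed.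

Lemma clamp_id a b x : a <= x <= b -> clamp a b x = x.
Proof. intros; unfold clamp, Rmax, Rmin; repeat destruct Rle_dec; lra. Qed.

Lemma clamp_lipschitz a b x y : a <= b -> Rabs (clamp a b y - clamp a b x) <= Rabs (y - x).
Proof.
  intros; unfold clamp, Rmax, Rmin; repeat destruct Rle_dec; unfold Rabs;
  repeat destruct Rcase_abs; lra.
Qed.

Lemma clamp_ext_continuous_pt g a b x : 0 <= a -> a <= b -> b <= 1 ->
  cont01_at g (clamp a b x) -> continuity_pt (clamp_ext g a b) x.
Proof.
  intros Ha Hab Hb Hc.
  unfold continuity_pt, continue_in, limit1_in, limit_in; simpl; unfold R_dist.
  intros eps He.
  destruct (Hc eps He) as [d [Hd Hd']].
  exists d; split; [exact Hd |].
  intros y [_ Hy]. unfold clamp_ext.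
  apply Hd'.
  - pose proof (clamp_in a b y Hab); lra.
  - eapply Rle_lt_trans; [apply clamp_lipschitz; exact Hab | exact Hy].
Qed.

Lemma clamp_ext_continuous g a b : 0 <= a -> a <= b -> b <= 1 ->
  (forall x, a <= x <= b -> cont01_at g x) -> continuity (clamp_ext g a b).
Proof.
  intros Ha Hab Hb Hc x.
  apply clamp_ext_continuous_pt; auto. apply Hc, clamp_in, Hab.
Qed.

Lemma continuity_pt_cont01 f x : 0 <= x <= 1 ->
  continuity_pt (clamp_ext f 0 1) x -> cont01_at f x.
Proof.
  intros Hx Hc eps He.
  unfold continuity_pt, continue_in, limit1_in, limit_in in Hc; simpl in Hc;
    unfold R_dist in Hc.
  destruct (Hc eps He) as [d [Hd Hd']].
  exists d; split; [exact Hd |].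
  intros y Hy Hyx.
  destruct (Req_dec x y) as [<- | Hne].
  { replace (f x - f x) with 0 by ring; rewrite Rabs_R0; lra. }
  assert (H := Hd' y (conj (conj I Hne) Hyx)).
  unfold clamp_ext in H. rewrite !clamp_id in H by lra. exact H.
Qed.

Lemma cont01_continuity_pt f x : 0 <= x <= 1 -> cont01_at f x ->
  continuity_pt (clamp_ext f 0 1) x.
Proof.
  intros Hx Hc. apply clamp_ext_continuous_pt; try lra. rewrite clamp_id; auto.
Qed.

Lemma cont01_minus f g x : 0 <= x <= 1 -> cont01_at f x -> cont01_at g x ->
  cont01_at (fun s => f s - g s) x.
Proof.
  intros Hx Hf Hg. apply continuity_pt_cont01; [exact Hx |].
  apply (continuity_pt_minus (clamp_ext f 0 1) (clamp_ext g 0 1));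
    apply cont01_continuity_pt; auto.
Qed.

Lemma cont01_comp (phi : R -> R) f x : 0 <= x <= 1 -> continuity phi ->
  cont01_at f x -> cont01_at (fun s => phi (f s)) x.
Proof.
  intros Hx Hp Hf. apply continuity_pt_cont01; [exact Hx |].
  apply (continuity_pt_comp (clamp_ext f 0 1) phi);
    [apply cont01_continuity_pt; auto | apply Hp].
Qed.

Lemma cont01_const c x : cont01_at (fun _ => c) x.
Proof.
  intros eps He. exists 1; split; [lra |]. intros.
  replace (c - c) with 0 by ring; rewrite Rabs_R0; lra.
Qed.

Lemma cont01_id x : cont01_at (fun s => s) x.
Proof. intros eps He. exists eps; split; [lra |]. intros; assumption. Qed.

Lemma continuity_scal a : continuity (fun y => a * y).
Proof.
  intro x. apply (continuity_pt_scal id).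
  apply derivable_continuous_pt, derivable_pt_id.
Qed.

Lemma continuity_opp_pow n : continuity (fun y => (- y) ^ n).
Proof.
  intro x. apply (continuity_pt_comp Ropp (fun y => y ^ n)).
  - apply continuity_pt_opp, derivable_continuous_pt, derivable_pt_id.
  - apply derivable_continuous, derivable_pow.
Qed.

Lemma deriv01_cont f x l : 0 <= x <= 1 -> deriv01_at f x l -> cont01_at f x.
Proof.
  intros Hx Hd eps He.
  destruct (Hd 1 Rlt_0_1) as [d [Hdp Hd']].
  set (K := 1 + Rabs l).
  assert (HK : 0 < K) by (unfold K; pose proof (Rabs_pos l); lra).
  exists (Rmin d (eps / K)); split.
  { apply Rmin_pos; [lra | apply Rdiv_lt_0_compat; lra]. }
  intros y Hy Hyx.
  destruct (Req_dec y x) as [-> | Hne].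
  { replace (f x - f x) with 0 by ring; rewrite Rabs_R0; lra. }
  set (h := y - x).
  assert (Hh : h <> 0) by (unfold h; lra).
  assert (Hha : Rabs h < d) by (eapply Rlt_le_trans; [exact Hyx | apply Rmin_l]).
  assert (Hhb : Rabs h < eps / K) by (eapply Rlt_le_trans; [exact Hyx | apply Rmin_r]).
  specialize (Hd' h Hh Hha ltac:(unfold h; lra)).
  replace (x + h) with y in Hd' by (unfold h; ring).
  assert (Hquot : Rabs ((f y - f x) / h) < K).
  { unfold K. replace ((f y - f x) / h) with (((f y - f x) / h - l) + l) by ring.
    eapply Rle_lt_trans; [apply Rabs_triang |]. lra. }
  replace (f y - f x) with (((f y - f x) / h) * h) by (field; exact Hh).
  rewrite Rabs_mult.
  assert (0 < Rabs h) by (apply Rabs_pos_lt; exact Hh).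
  apply Rle_lt_trans with (K * Rabs h); [apply Rmult_le_compat_r; lra |].
  apply Rlt_le_trans with (K * (eps / K)); [apply Rmult_lt_compat_l; lra |].
  right; field; lra.
Qed.

Lemma deriv01_interior f x l : 0 < x < 1 -> deriv01_at f x l ->
  derivable_pt_lim f x l.
Proof.
  intros Hx Hd eps He.
  destruct (Hd eps He) as [d [Hdp Hd']].
  assert (Hm : 0 < Rmin d (Rmin x (1 - x))) by (repeat apply Rmin_pos; lra).
  exists (mkposreal _ Hm). intros h Hh Hha; simpl in Hha.
  pose proof (Rmin_l d (Rmin x (1 - x))). pose proof (Rmin_r d (Rmin x (1 - x))).
  pose proof (Rmin_l x (1 - x)). pose proof (Rmin_r x (1 - x)).
  apply Hd'; [exact Hh | lra |].
  unfold Rabs in Hha; destruct Rcase_abs in Hha; lra.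
Qed.

Lemma derivable_pt_lim_local f g x l d : 0 < d ->
  (forall y, Rabs (y - x) < d -> f y = g y) ->
  derivable_pt_lim f x l -> derivable_pt_lim g x l.
Proof.
  intros Hd Hfg Hf eps He.
  destruct (Hf eps He) as [del Hdel].
  assert (Hm : 0 < Rmin del d) by (apply Rmin_pos; [apply cond_pos | exact Hd]).
  exists (mkposreal _ Hm). intros h Hh Hha. simpl in Hha.
  rewrite <- !Hfg.
  - apply Hdel; [exact Hh |]. eapply Rlt_le_trans; [exact Hha | apply Rmin_l].
  - replace (x - x) with 0 by ring. rewrite Rabs_R0; exact Hd.
  - replace (x + h - x) with h by ring. eapply Rlt_le_trans; [exact Hha | apply Rmin_r].
Qed.

Lemma derivable_pt_lim_ext f g x l : (forall y, f y = g y) ->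
  derivable_pt_lim f x l -> derivable_pt_lim g x l.
Proof. intros H. apply (derivable_pt_lim_local f g x l 1 Rlt_0_1). intros; auto. Qed.

Lemma mvt01 g g' a b : 0 <= a -> a < b -> b <= 1 ->
  (forall x, a < x < b -> derivable_pt_lim g x (g' x)) ->
  (forall x, a <= x <= b -> cont01_at g x) ->
  exists c, a < c < b /\ g b - g a = g' c * (b - a).
Proof.
  intros Ha Hab Hb Hd Hc.
  set (h := clamp_ext g a b).
  assert (Hhd : forall x, a < x < b -> derivable_pt_lim h x (g' x)).
  { intros x Hx. apply (derivable_pt_lim_local g h x (g' x) (Rmin (x - a) (b - x))).
    - apply Rmin_pos; lra.
    - intros y Hy. unfold h, clamp_ext. rewrite clamp_id; [reflexivity |].
      pose proof (Rmin_l (x - a) (b - x)); pose proof (Rmin_r (x - a) (b - x)).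
      unfold Rabs in Hy; destruct Rcase_abs in Hy; lra.
    - apply Hd; exact Hx. }
  assert (pr1 : forall c, a < c < b -> derivable_pt h c)
    by (intros c Hc'; exists (g' c); apply Hhd; exact Hc').
  assert (pr2 : forall c, a < c < b -> derivable_pt id c)
    by (intros; apply derivable_pt_id).
  assert (Hch : forall c, a <= c <= b -> continuity_pt h c)
    by (intros c _; apply clamp_ext_continuous; lra || exact Hc).
  assert (Hci : forall c, a <= c <= b -> continuity_pt id c)
    by (intros; apply derivable_continuous_pt, derivable_pt_id).
  destruct (MVT h id a b pr1 pr2 Hab Hch Hci) as [c [P HP]].
  exists c; split; [exact P |].
  rewrite (derive_pt_eq_0 h c (g' c) (pr1 c P) (Hhd c P)) in HP.
  rewrite (derive_pt_eq_0 id c 1 (pr2 c P) (derivable_pt_lim_id c)) in HP.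
  unfold h, clamp_ext, id in HP. rewrite !clamp_id in HP by lra. lra.
Qed.

Lemma abs_max01 g a b : 0 <= a -> a <= b -> b <= 1 ->
  (forall x, a <= x <= b -> cont01_at g x) ->
  exists m, a <= m <= b /\ forall x, a <= x <= b -> Rabs (g x) <= Rabs (g m).
Proof.
  intros Ha Hab Hb Hc.
  destruct (continuity_ab_maj (clamp_ext (fun y => Rabs (g y)) a b) a b Hab)
    as [m [Hm1 Hm2]].
  { intros c _; apply clamp_ext_continuous; auto.
    intros x Hx. apply (cont01_comp Rabs g x ltac:(lra) Rcontinuity_abs), Hc, Hx. }
  exists m; split; [exact Hm2 |]. intros x Hx.
  specialize (Hm1 x Hx). unfold clamp_ext in Hm1. rewrite !clamp_id in Hm1 by lra.
  exact Hm1.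
Qed.

Lemma ivt01 g a b : 0 <= a -> a <= b -> b <= 1 ->
  (forall x, a <= x <= b -> cont01_at g x) -> g a * g b <= 0 ->
  exists z, a <= z <= b /\ g z = 0.
Proof.
  intros Ha Hab Hb Hc Hs.
  destruct (IVT_cor (clamp_ext g a b) a b) as [z [Hz1 Hz2]].
  - apply clamp_ext_continuous; auto.
  - exact Hab.
  - unfold clamp_ext; rewrite !clamp_id by lra; exact Hs.
  - exists z; split; [exact Hz1 |].
    unfold clamp_ext in Hz2; rewrite clamp_id in Hz2 by lra; exact Hz2.
Qed.

Lemma sign_constant g b : 0 < b <= 1 -> (forall x, 0 <= x <= 1 -> cont01_at g x) ->
  (forall x, 0 < x <= b -> g x <> 0) ->
  forall x y, 0 < x <= b -> 0 < y <= b -> 0 < g x * g y.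
Proof.
  intros Hb Hc Hnz x y Hx Hy.
  destruct (Rlt_le_dec 0 (g x * g y)) as [| Hle]; [assumption |]. exfalso.
  destruct (Rle_lt_dec x y) as [Hxy | Hxy].
  - destruct (ivt01 g x y ltac:(lra) Hxy ltac:(lra)) as [z [Hz Hz']];
      [intros; apply Hc; lra | exact Hle |].
    apply (Hnz z); [lra | exact Hz'].
  - destruct (ivt01 g y x ltac:(lra) ltac:(lra) ltac:(lra)) as [z [Hz Hz']];
      [intros; apply Hc; lra | rewrite Rmult_comm; exact Hle |].
    apply (Hnz z); [lra | exact Hz'].
Qed.

Lemma continuation_principle (Q : R -> Prop) :
  Q 0 ->
  (forall t, 0 < t <= 1 -> (forall r, 0 <= r < t -> Q r) -> Q t) ->
  (forall t, 0 <= t < 1 -> Q t ->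
     exists d, 0 < d /\ forall r, t <= r <= t + d -> r <= 1 -> Q r) ->
  forall r, 0 <= r <= 1 -> Q r.
Proof.
  intros H0 Hclosed Hstep.
  set (E := fun t => 0 <= t <= 1 /\ forall r, 0 <= r <= t -> Q r).
  assert (HE0 : E 0).
  { split; [lra |]. intros r Hr. replace r with 0 by lra. exact H0. }
  assert (Hbound : bound E) by (exists 1; intros t [Ht _]; lra).
  destruct (completeness E Hbound (ex_intro _ 0 HE0)) as [s [Hub Hlub]].
  assert (Hs0 : 0 <= s) by (apply Hub; exact HE0).
  assert (Hs1 : s <= 1) by (apply Hlub; intros t [Ht _]; lra).
  assert (Hbelow : forall r, 0 <= r < s -> Q r).
  { intros r Hr. destruct (classic (Q r)) as [| HnQ]; [assumption |].
    exfalso. assert (s <= r); [| lra].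
    apply Hlub. intros t [Ht Ht']. destruct (Rle_lt_dec t r) as [| Hlt]; [assumption |].
    exfalso; apply HnQ, Ht'; lra. }
  assert (HEs : E s).
  { split; [lra |]. intros r Hr. destruct (Req_dec r s) as [-> |]; [| apply Hbelow; lra].
    destruct (Req_dec s 0) as [-> |]; [exact H0 | apply Hclosed; [lra | exact Hbelow]]. }
  assert (Hs : s = 1).
  { destruct (Req_dec s 1) as [| Hne]; [assumption |]. exfalso.
    destruct (Hstep s ltac:(lra) (proj2 HEs s ltac:(lra))) as [d [Hd Hd']].
    set (t' := Rmin 1 (s + d)).
    pose proof (Rmin_l 1 (s + d)); pose proof (Rmin_r 1 (s + d)).
    assert (Et' : E t').
    { split; [unfold t'; split; [apply Rmin_glb; lra | lra] |].
      intros r Hr. destruct (Rle_lt_dec r s).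
      - apply (proj2 HEs); lra.
      - apply Hd'; unfold t' in *; lra. }
    pose proof (Hub t' Et').
    assert (s < t') by (apply Rmin_glb_lt; lra). lra. }
  subst s. intros r Hr. apply (proj2 HEs); exact Hr.
Qed.

Lemma cont01_eq_left f g t : 0 < t <= 1 -> cont01_at f t -> cont01_at g t ->
  (forall r, 0 <= r < t -> f r = g r) -> f t = g t.
Proof.
  intros Ht Hf Hg Heq.
  apply NNPP; intro Hne.
  set (e := Rabs (f t - g t) / 2).
  assert (He : 0 < e) by (unfold e; apply Rdiv_lt_0_compat; [apply Rabs_pos_lt; lra | lra]).
  destruct (Hf e He) as [d1 [Hd1 Hd1']]. destruct (Hg e He) as [d2 [Hd2 Hd2']].
  set (h := Rmin t (Rmin d1 d2) / 2).
  pose proof (Rmin_l t (Rmin d1 d2)); pose proof (Rmin_r t (Rmin d1 d2)).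
  pose proof (Rmin_l d1 d2); pose proof (Rmin_r d1 d2).
  assert (Hh : 0 < Rmin t (Rmin d1 d2)) by (repeat apply Rmin_pos; lra).
  assert (Hrt : Rabs (t - h - t) = h).
  { replace (t - h - t) with (- h) by ring. rewrite Rabs_Ropp, Rabs_right; unfold h; lra. }
  specialize (Hd1' (t - h) ltac:(unfold h; lra) ltac:(unfold h in *; lra)).
  specialize (Hd2' (t - h) ltac:(unfold h; lra) ltac:(unfold h in *; lra)).
  rewrite (Heq (t - h) ltac:(unfold h; lra)) in Hd1'.
  assert (Rabs (f t - g t) <= Rabs (g (t - h) - f t) + Rabs (g (t - h) - g t)).
  { replace (f t - g t) with (- (g (t - h) - f t) + (g (t - h) - g t)) by ring.
    eapply Rle_trans; [apply Rabs_triang |]. rewrite Rabs_Ropp; lra. }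
  unfold e in *; lra.
Qed.

Lemma pow_lt_compat x y n : 0 <= x < y -> (1 <= n)%nat -> x ^ n < y ^ n.
Proof.
  intros Hxy Hn. induction n as [| n IH]; [lia |].
  destruct n as [| n]; [simpl; lra |].
  assert (IH' : x ^ S n < y ^ S n) by (apply IH; lia).
  change (x * x ^ S n < y * y ^ S n).
  pose proof (pow_le x (S n) ltac:(lra)).
  apply Rle_lt_trans with (x * y ^ S n);
    [apply Rmult_le_compat_l | apply Rmult_lt_compat_r]; lra.
Qed.

Lemma pow_le_root x b n : 0 <= x -> 0 <= b -> (1 <= n)%nat -> x ^ n <= b ^ n -> x <= b.
Proof.
  intros Hx Hb Hn H. destruct (Rle_lt_dec x b) as [| Hlt]; [assumption |].
  pose proof (pow_lt_compat b x n ltac:(lra) Hn). lra.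
Qed.

Lemma pow0_pos_exp n : (1 <= n)%nat -> 0 ^ n = 0.
Proof. intros. destruct n; [lia |]. simpl; ring. Qed.

Lemma Rabs_opp_pow x n : Rabs ((- x) ^ n) = Rabs x ^ n.
Proof. rewrite <- RPow_abs, Rabs_Ropp. reflexivity. Qed.

Lemma pow_even_nonneg x n : Nat.Even n -> 0 <= x ^ n.
Proof.
  intros [k ->]. rewrite pow_mult. apply pow_le.
  simpl. rewrite Rmult_1_r. apply Rle_0_sqr.
Qed.

Lemma pow_odd_neg x n : Nat.Odd n -> x < 0 -> x ^ n < 0.
Proof.
  intros [k ->] Hx. rewrite pow_add, pow_mult. simpl.
  assert (0 < (x * (x * 1)) ^ k) by (apply pow_lt; nra).
  nra.
Qed.

Lemma pow_diff_upper n a b M : Rabs a <= M -> Rabs b <= M ->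
  Rabs (a ^ n - b ^ n) <= INR n * M ^ (n - 1) * Rabs (a - b).
Proof.
  intros Ha Hb. assert (HM : 0 <= M) by (pose proof (Rabs_pos a); lra).
  destruct n as [| n].
  { simpl. replace (1 - 1) with 0 by ring. rewrite Rabs_R0. lra. }
  replace (S n - 1)%nat with n by lia.
  induction n as [| n IH]; [simpl; rewrite !Rmult_1_r; lra |].
  replace (a ^ S (S n) - b ^ S (S n)) with (a * (a ^ S n - b ^ S n) + b ^ S n * (a - b))
    by (simpl; ring).
  eapply Rle_trans; [apply Rabs_triang |]. rewrite !Rabs_mult, <- RPow_abs.
  assert (H1 : Rabs a * Rabs (a ^ S n - b ^ S n) <= M * (INR (S n) * M ^ n * Rabs (a - b)))
    by (apply Rmult_le_compat; try apply Rabs_pos; assumption).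
  assert (H2 : Rabs b ^ S n * Rabs (a - b) <= M ^ S n * Rabs (a - b)).
  { apply Rmult_le_compat_r; [apply Rabs_pos |].
    apply pow_incr. split; [apply Rabs_pos | assumption]. }
  replace (INR (S (S n)) * M ^ S n * Rabs (a - b)) with
    (M * (INR (S n) * M ^ n * Rabs (a - b)) + M ^ S n * Rabs (a - b))
    by (rewrite (S_INR (S n)); simpl; ring).
  lra.
Qed.

Lemma pow_diff_lower_ordered n a b m : 0 <= m -> m <= b -> b <= a ->
  INR (S n) * m ^ n * (a - b) <= a ^ S n - b ^ S n.
Proof.
  intros Hm Hb Hab. induction n as [| n IH]; [simpl; lra |].
  replace (a ^ S (S n) - b ^ S (S n)) with (a * (a ^ S n - b ^ S n) + b ^ S n * (a - b))
    by (simpl; ring).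
  replace (INR (S (S n)) * m ^ S n * (a - b)) with
    (m * (INR (S n) * m ^ n * (a - b)) + m ^ S n * (a - b))
    by (rewrite (S_INR (S n)); simpl; ring).
  assert (0 <= INR (S n) * m ^ n * (a - b))
    by (apply Rmult_le_pos; [apply Rmult_le_pos; [apply pos_INR | apply pow_le; lra] | lra]).
  assert (m * (INR (S n) * m ^ n * (a - b)) <= a * (a ^ S n - b ^ S n))
    by (apply Rmult_le_compat; lra).
  assert (m ^ S n * (a - b) <= b ^ S n * (a - b))
    by (apply Rmult_le_compat_r; [lra | apply pow_incr; lra]).
  lra.
Qed.

Lemma pow_diff_lower n a b m : 0 <= m -> m <= a -> m <= b ->
  INR n * m ^ (n - 1) * Rabs (a - b) <= Rabs (a ^ n - b ^ n).
Proof.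
  intros Hm Ha Hb. destruct n as [| n].
  { simpl. rewrite Rmult_0_l, Rmult_0_l. apply Rabs_pos. }
  replace (S n - 1)%nat with n by lia.
  assert (Hc : forall d, 0 <= d -> 0 <= INR (S n) * m ^ n * d)
    by (intros; apply Rmult_le_pos; [apply Rmult_le_pos; [apply pos_INR | apply pow_le] |]; lra).
  destruct (Rle_lt_dec b a) as [Hab | Hab].
  - pose proof (pow_diff_lower_ordered n a b m Hm Hb Hab). pose proof (Hc (a - b) ltac:(lra)).
    rewrite (Rabs_right (a - b)), Rabs_right; lra.
  - pose proof (pow_diff_lower_ordered n b a m Hm Ha ltac:(lra)).
    pose proof (Hc (b - a) ltac:(lra)).
    rewrite (Rabs_left1 (a - b)), Rabs_left1; lra.
Qed.

Definition flux (N : nat) (w1 : R -> R) (r : R) : R := (- w1 r) ^ N.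

Definition source (N : nat) (lam : R) (w : R -> R) (r : R) : R :=
  lam ^ N * INR N * r ^ (N - 1) * (w r) ^ N.

(* First-order form of (B2) without the condition at r = 1: w has the
   continuous derivative w1 on [0,1], the flux has derivative the source in
   (0,1), and w1(0) = 0.  All arguments below only use this form. *)
Definition is_sol (N : nat) (lam : R) (w w1 : R -> R) : Prop :=
  (forall x, 0 <= x <= 1 -> deriv01_at w x (w1 x)) /\
  (forall x, 0 <= x <= 1 -> cont01_at w1 x) /\
  (forall r, 0 < r < 1 -> derivable_pt_lim (flux N w1) r (source N lam w r)) /\
  w1 0 = 0.

Lemma is_sol_of_B2 N lam v v1 v2 : C2_01 v v1 v2 -> solves_B2 N lam v v1 ->
  is_sol N lam v v1.
Proof.
  intros [H1 [H2 _]] [S1 [S2 _]]. repeat split; auto.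
  intros x Hx. apply (deriv01_cont v1 x (v2 x) Hx), H2, Hx.
Qed.

Section SolutionBasics.

Variables (N : nat) (lam : R) (w w1 : R -> R).
Hypothesis Hsol : is_sol N lam w w1.

Lemma sol_der0 : w1 0 = 0.
Proof. apply Hsol. Qed.

Lemma sol_cont x : 0 <= x <= 1 -> cont01_at w x.
Proof. intros Hx. apply (deriv01_cont w x (w1 x) Hx), Hsol, Hx. Qed.

Lemma sol_cont_der x : 0 <= x <= 1 -> cont01_at w1 x.
Proof. apply Hsol. Qed.

Lemma sol_cont_flux x : 0 <= x <= 1 -> cont01_at (flux N w1) x.
Proof.
  intros Hx. apply (cont01_comp (fun y => (- y) ^ N));
    auto using continuity_opp_pow, sol_cont_der.
Qed.

Lemma sol_deriv x : 0 < x < 1 -> derivable_pt_lim w x (w1 x).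
Proof. intros Hx. apply deriv01_interior; [exact Hx |]. apply Hsol; lra. Qed.

Lemma sol_deriv_flux x : 0 < x < 1 -> derivable_pt_lim (flux N w1) x (source N lam w x).
Proof. apply Hsol. Qed.

Lemma sol_mvt a b : 0 <= a -> a < b -> b <= 1 ->
  exists xi, a < xi < b /\ w b - w a = w1 xi * (b - a).
Proof.
  intros. apply mvt01; auto.
  - intros; apply sol_deriv; lra.
  - intros; apply sol_cont; lra.
Qed.

Lemma sol_mvt_flux a b : 0 <= a -> a < b -> b <= 1 ->
  exists xi, a < xi < b /\ flux N w1 b - flux N w1 a = source N lam w xi * (b - a).
Proof.
  intros. apply mvt01; auto.
  - intros; apply sol_deriv_flux; lra.
  - intros; apply sol_cont_flux; lra.
Qed.

End SolutionBasics.

Lemma source_nonneg N lam w x : 0 <= lam -> 0 <= x -> 0 <= (w x) ^ N ->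
  0 <= source N lam w x.
Proof.
  intros. unfold source.
  repeat apply Rmult_le_pos; auto; try apply pow_le; try lra. apply pos_INR.
Qed.

Lemma source_abs_le N lam w x D : 0 <= lam -> 0 <= x <= 1 -> Rabs (w x) <= D ->
  Rabs (source N lam w x) <= lam ^ N * INR N * D ^ N.
Proof.
  intros Hl Hx Hy. unfold source.
  assert (HD : 0 <= D) by (pose proof (Rabs_pos (w x)); lra).
  rewrite !Rabs_mult, <- !RPow_abs, (Rabs_right lam), (Rabs_right (INR N)), (Rabs_right x)
    by (apply Rle_ge; auto using pos_INR; lra).
  assert (x ^ (N - 1) <= 1) by (rewrite <- (pow1 (N - 1)); apply pow_incr; lra).
  assert (Rabs (w x) ^ N <= D ^ N) by (apply pow_incr; split; [apply Rabs_pos | exact Hy]).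
  assert (0 <= lam ^ N * INR N) by (apply Rmult_le_pos; [apply pow_le; lra | apply pos_INR]).
  pose proof (pow_le x (N - 1) ltac:(lra)). pose proof (pow_le (Rabs (w x)) N (Rabs_pos _)).
  replace (lam ^ N * INR N * D ^ N) with (lam ^ N * INR N * 1 * D ^ N) by ring.
  apply Rmult_le_compat; nra.
Qed.

Lemma sol_flux_variation N lam w w1 a r D : 0 <= lam -> is_sol N lam w w1 ->
  0 <= a <= r -> r <= 1 -> (forall y, a <= y <= r -> Rabs (w y) <= D) ->
  Rabs (flux N w1 r - flux N w1 a) <= lam ^ N * INR N * D ^ N * (r - a).
Proof.
  intros Hl Hw Har Hr HD.
  destruct (Req_dec r a) as [-> | Hne].
  { rewrite Rminus_diag, Rabs_R0, Rminus_diag, Rmult_0_r. lra. }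
  destruct (sol_mvt_flux N lam w w1 Hw a r ltac:(lra) ltac:(lra) Hr) as [xi [Hxi Hmvt]].
  rewrite Hmvt, Rabs_mult, (Rabs_right (r - a)) by lra.
  apply Rmult_le_compat_r; [lra |]. apply source_abs_le; [lra | lra | apply HD; lra].
Qed.

Lemma sol_value_variation N lam w w1 a r G : is_sol N lam w w1 ->
  0 <= a <= r -> r <= 1 -> (forall y, a <= y <= r -> Rabs (w1 y) <= G) ->
  Rabs (w r - w a) <= G * (r - a).
Proof.
  intros Hw Har Hr HG.
  destruct (Req_dec r a) as [-> | Hne].
  { rewrite !Rminus_diag, Rabs_R0, Rmult_0_r. lra. }
  destruct (sol_mvt N lam w w1 Hw a r ltac:(lra) ltac:(lra) Hr) as [xi [Hxi Hmvt]].
  rewrite Hmvt, Rabs_mult, (Rabs_right (r - a)) by lra.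
  apply Rmult_le_compat_r; [lra | apply HG; lra].
Qed.

Lemma sol_scale N lam w w1 a : is_sol N lam w w1 ->
  is_sol N lam (fun x => a * w x) (fun x => a * w1 x).
Proof.
  intros Hsol. pose proof Hsol as [H1 [H2 [H3 H4]]]. repeat split.
  - intros x Hx eps He.
    destruct (H1 x Hx (eps / (Rabs a + 1))) as [d [Hd Hd']].
    { apply Rdiv_lt_0_compat; [lra | pose proof (Rabs_pos a); lra]. }
    exists d; split; [exact Hd |]. intros h Hh Hha Hin.
    specialize (Hd' h Hh Hha Hin).
    replace ((a * w (x + h) - a * w x) / h - a * w1 x) with
      (a * ((w (x + h) - w x) / h - w1 x)) by (field; exact Hh).
    rewrite Rabs_mult. pose proof (Rabs_pos a).
    pose proof (Rabs_pos ((w (x + h) - w x) / h - w1 x)).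
    apply Rle_lt_trans with ((Rabs a + 1) * Rabs ((w (x + h) - w x) / h - w1 x)); [nra |].
    apply Rlt_le_trans with ((Rabs a + 1) * (eps / (Rabs a + 1)));
      [apply Rmult_lt_compat_l; lra | right; field; lra].
  - intros x Hx. apply (cont01_comp (fun y => a * y) w1 x Hx (continuity_scal a)); auto.
  - intros r Hr. unfold flux, source.
    apply (derivable_pt_lim_ext (fun s => a ^ N * flux N w1 s)).
    { intros y. unfold flux. rewrite <- Rpow_mult_distr. f_equal; ring. }
    replace (lam ^ N * INR N * r ^ (N - 1) * (a * w r) ^ N)
      with (a ^ N * source N lam w r) by (unfold source; rewrite Rpow_mult_distr; ring).
    apply derivable_pt_lim_scal; auto.
  - rewrite H4; ring.
Qed.

Lemma sol_dilate N lam w w1 c : 0 < c <= 1 -> is_sol N lam w w1 ->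
  is_sol N (c * c * lam) (fun r => w (c * r)) (fun r => c * w1 (c * r)).
Proof.
  intros Hc Hsol. pose proof Hsol as [H1 [H2 [H3 H4]]]. repeat split.
  - intros x Hx eps He.
    destruct (H1 (c * x) ltac:(nra) (eps / c)) as [d [Hd Hd']].
    { apply Rdiv_lt_0_compat; lra. }
    exists (d / c); split; [apply Rdiv_lt_0_compat; lra |].
    intros h Hh Hha Hin.
    assert (Hch : c * h <> 0) by (apply Rmult_integral_contrapositive; split; lra).
    assert (Hcha : Rabs (c * h) < d).
    { rewrite Rabs_mult, (Rabs_right c) by lra.
      apply Rlt_le_trans with (c * (d / c)); [apply Rmult_lt_compat_l; lra | right; field; lra]. }
    specialize (Hd' (c * h) Hch Hcha ltac:(nra)).
    replace ((w (c * (x + h)) - w (c * x)) / h - c * w1 (c * x)) with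
      (c * ((w (c * x + c * h) - w (c * x)) / (c * h) - w1 (c * x)))
      by (replace (c * (x + h)) with (c * x + c * h) by ring; field; split; lra).
    rewrite Rabs_mult, (Rabs_right c) by lra.
    apply Rlt_le_trans with (c * (eps / c)); [apply Rmult_lt_compat_l; lra | right; field; lra].
  - intros x Hx.
    apply (cont01_comp (fun y => c * y) (fun r => w1 (c * r)) x Hx (continuity_scal c)).
    intros eps He. destruct (H2 (c * x) ltac:(nra) eps He) as [d [Hd Hd']].
    exists (d / c); split; [apply Rdiv_lt_0_compat; lra |].
    intros y Hy Hyx. apply Hd'; [nra |].
    replace (c * y - c * x) with (c * (y - x)) by ring.
    rewrite Rabs_mult, Rabs_right by lra.
    apply Rlt_le_trans with (c * (d / c)); [apply Rmult_lt_compat_l; lra | right; field; lra].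
  - intros r Hr.
    apply (derivable_pt_lim_ext (fun s => c ^ N * flux N w1 (c * s))).
    { intros y. unfold flux. rewrite <- Rpow_mult_distr. f_equal; ring. }
    replace (source N (c * c * lam) (fun r => w (c * r)) r)
      with (c ^ N * (source N lam w (c * r) * c)).
    2:{ unfold source. destruct N as [| n]; [simpl; ring |].
        replace (S n - 1)%nat with n by lia. rewrite !Rpow_mult_distr. simpl. ring. }
    apply (derivable_pt_lim_scal (fun s => flux N w1 (c * s))).
    apply (derivable_pt_lim_comp (fun s => c * s) (flux N w1) r c); [| apply H3; nra].
    pose proof (derivable_pt_lim_scal id c r 1 (derivable_pt_lim_id r)) as Hlin.
    rewrite Rmult_1_r in Hlin. exact Hlin.
  - rewrite Rmult_0_r, H4; ring.
Qed.

Lemma sol_zero N lam : (1 <= N)%nat -> is_sol N lam (fun _ => 0) (fun _ => 0).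
Proof.
  intros HN. repeat split; auto using cont01_const.
  - intros x Hx eps He. exists 1; split; [lra |]. intros h Hh _ _.
    replace ((0 - 0) / h - 0) with 0 by (field; exact Hh). rewrite Rabs_R0; lra.
  - intros r Hr. unfold source. rewrite pow0_pos_exp, Rmult_0_r by exact HN.
    apply (derivable_pt_lim_ext (fun _ => 0));
      [intros; unfold flux; rewrite Ropp_0, pow0_pos_exp by exact HN; reflexivity |].
    apply derivable_pt_lim_const.
Qed.

Lemma Rabs_le_0 x : Rabs x <= 0 -> x = 0.
Proof.
  intros H. destruct (Req_dec x 0) as [| Hn]; [assumption |].
  pose proof (Rabs_pos_lt _ Hn). lra.
Qed.

(* Contraction: if g and g1 = g' vanish at a and, on [a,b], sup|g1| is
   bounded by K sup|g| with K (b - a) <= 1/2, then g and g1 vanish on [a,b]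
   (by the mean value theorem sup|g| <= sup|g| / 2). *)
Lemma contraction_vanish g g1 a b K :
  0 <= a -> a < b -> b <= 1 -> K * (b - a) <= 1 / 2 ->
  (forall x, a < x < b -> derivable_pt_lim g x (g1 x)) ->
  (forall x, a <= x <= b -> cont01_at g x) ->
  g a = 0 -> g1 a = 0 ->
  (forall E, 0 <= E -> (forall y, a <= y <= b -> Rabs (g y) <= E) ->
     forall x, a < x <= b -> Rabs (g1 x) <= K * E) ->
  forall x, a <= x <= b -> g x = 0 /\ g1 x = 0.
Proof.
  intros Ha Hab Hb HKb Hd Hc Hga Hg1a Hbound.
  destruct (abs_max01 g a b Ha ltac:(lra) Hb Hc) as [m [Hm Hmax]].
  set (E := Rabs (g m)) in Hmax.
  assert (HE : 0 <= E) by apply Rabs_pos.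
  pose proof (Hbound E HE Hmax) as Hder.
  assert (Hhalf : forall r, a <= r <= b -> Rabs (g r) <= E / 2).
  { intros r Hr. destruct (Req_dec r a) as [-> | Hne]; [rewrite Hga, Rabs_R0; lra |].
    destruct (mvt01 g g1 a r Ha ltac:(lra) ltac:(lra)) as [xi [Hxi Hmvt]];
      [intros; apply Hd; lra | intros; apply Hc; lra |].
    replace (g r) with (g r - g a) by (rewrite Hga; ring).
    rewrite Hmvt, Rabs_mult, (Rabs_right (r - a)) by lra.
    pose proof (Hder xi ltac:(lra)). pose proof (Rabs_pos (g1 xi)).
    apply Rle_trans with (K * E * (b - a)); [apply Rmult_le_compat; lra | nra]. }
  assert (HE0 : E = 0) by (pose proof (Hhalf m Hm) as Hm2; fold E in Hm2; lra).
  intros x Hx. split.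
  - apply Rabs_le_0. pose proof (Hhalf x Hx). lra.
  - destruct (Req_dec x a) as [-> | Hne]; [exact Hg1a |].
    apply Rabs_le_0. pose proof (Hder x ltac:(lra)). rewrite HE0, Rmult_0_r in H. exact H.
Qed.

Lemma sol_agree N lam mu w w1 u u1 : is_sol N lam w w1 -> is_sol N mu u u1 ->
  w 0 = u 0 ->
  (forall t, 0 <= t < 1 -> w t = u t -> w1 t = u1 t ->
     exists d, 0 < d /\ forall r, t <= r <= t + d -> r <= 1 -> w r = u r /\ w1 r = u1 r) ->
  forall r, 0 <= r <= 1 -> w r = u r /\ w1 r = u1 r.
Proof.
  intros Hw Hu H0 Hstep.
  apply (continuation_principle (fun r => w r = u r /\ w1 r = u1 r)).
  - split; [exact H0 | rewrite (sol_der0 _ _ _ _ Hw), (sol_der0 _ _ _ _ Hu); reflexivity].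
  - intros t Ht Hleft. split; apply cont01_eq_left; try exact Ht;
      try (intros r Hr; apply Hleft, Hr).
    + apply (sol_cont N lam w w1 Hw); lra.
    + apply (sol_cont N mu u u1 Hu); lra.
    + apply (sol_cont_der N lam w w1 Hw); lra.
    + apply (sol_cont_der N mu u u1 Hu); lra.
  - intros t Ht [Hwt Hw1t]. apply Hstep; auto.
Qed.

Lemma small_length K q : 0 <= K -> 0 < q -> exists d, 0 < d <= 1 /\ K * d <= q.
Proof.
  intros HK Hq. exists (Rmin 1 (q / (K + 1))).
  pose proof (Rmin_l 1 (q / (K + 1))). pose proof (Rmin_r 1 (q / (K + 1))).
  split; [split; [apply Rmin_pos; [lra | apply Rdiv_lt_0_compat; lra] | lra] |].
  apply Rle_trans with (K * (q / (K + 1))); [apply Rmult_le_compat_l; lra |].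
  apply Rmult_le_reg_l with (K + 1); [lra |].
  replace ((K + 1) * (K * (q / (K + 1)))) with (K * q) by (field; lra). nra.
Qed.

Lemma step_endpoint t d r : 0 <= t < 1 -> 0 < d -> t <= r <= t + d -> r <= 1 ->
  exists b, t < b <= 1 /\ b - t <= d /\ t <= r <= b.
Proof.
  intros Ht Hd Hr Hr1. exists (Rmin 1 (t + d)).
  pose proof (Rmin_l 1 (t + d)). pose proof (Rmin_r 1 (t + d)).
  split; [split; [apply Rmin_glb_lt | ]; lra |]. split; [lra |].
  split; [lra | apply Rmin_glb; lra].
Qed.

(* Where w and w1 vanish at t,
   the flux equation gives |w1|^N <= lam^N N (sup|w|)^N (x - t), so on a
   short interval sup|w1| <= sup|w| / 2 and the contraction applies. *)
Lemma sol_zero_data N lam w w1 : (1 <= N)%nat -> 0 <= lam -> is_sol N lam w w1 ->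
  w 0 = 0 -> forall r, 0 <= r <= 1 -> w r = 0 /\ w1 r = 0.
Proof.
  intros HN Hl Hw Hw0.
  apply (sol_agree N lam lam w w1 (fun _ => 0) (fun _ => 0) Hw (sol_zero N lam HN) Hw0).
  intros t Ht Hwt Hw1t.
  set (K := lam ^ N * INR N).
  assert (HK : 0 <= K) by (unfold K; apply Rmult_le_pos; [apply pow_le; lra | apply pos_INR]).
  destruct (small_length K ((1 / 2) ^ N) HK ltac:(apply pow_lt; lra)) as [d [Hd HKd]].
  exists d; split; [lra |]. intros r Hr Hr1.
  destruct (step_endpoint t d r Ht ltac:(lra) Hr Hr1) as [b [Hb [Hbd Hrb]]].
  apply (contraction_vanish w w1 t b (1 / 2)); try lra.
  - intros; apply (sol_deriv N lam w w1 Hw); lra.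
  - intros; apply (sol_cont N lam w w1 Hw); lra.
  - intros E HE Hsup x Hx.
    pose proof (sol_flux_variation N lam w w1 t x E Hl Hw ltac:(lra) ltac:(lra)
      ltac:(intros; apply Hsup; lra)) as Hvar.
    unfold flux in Hvar. fold K in Hvar.
    rewrite Hw1t, Ropp_0, pow0_pos_exp, Rminus_0_r, Rabs_opp_pow in Hvar by exact HN.
    apply (pow_le_root _ _ N (Rabs_pos _)); [lra | exact HN |].
    rewrite Rpow_mult_distr. pose proof (pow_le E N HE).
    assert (K * E ^ N * (x - t) <= K * d * E ^ N)
      by (replace (K * d * E ^ N) with (K * E ^ N * d) by ring;
          apply Rmult_le_compat_l; [apply Rmult_le_pos |]; lra).
    assert (K * d * E ^ N <= (1 / 2) ^ N * E ^ N) by (apply Rmult_le_compat_r; lra).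
    lra.
Qed.

Lemma sol_flux_pos N lam w w1 r : (1 <= N)%nat -> 0 < lam -> is_sol N lam w w1 ->
  0 < r <= 1 -> (forall x, 0 < x < r -> 0 < w x) -> 0 < flux N w1 r.
Proof.
  intros HN Hl Hw Hr Hpos.
  destruct (sol_mvt_flux N lam w w1 Hw 0 r ltac:(lra) ltac:(lra) ltac:(lra)) as [xi [Hxi Hmvt]].
  unfold flux at 2 in Hmvt.
  rewrite (sol_der0 _ _ _ _ Hw), Ropp_0, pow0_pos_exp, Rminus_0_r in Hmvt by exact HN.
  assert (0 < source N lam w xi).
  { unfold source. repeat apply Rmult_lt_0_compat; try apply pow_lt; try lra.
    - apply lt_0_INR; lia.
    - apply Hpos; lra. }
  rewrite Hmvt. apply Rmult_lt_0_compat; lra.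
Qed.

Lemma flux_pos_neq0 N w1 r : (1 <= N)%nat -> 0 < flux N w1 r -> w1 r <> 0.
Proof. unfold flux. intros HN H Hz. rewrite Hz, Ropp_0, pow0_pos_exp in H by exact HN. lra. Qed.

(* For even N the source is nonnegative, so the flux is nondecreasing. *)
Lemma sol_flux_mono_even N lam w w1 a b : Nat.Even N -> 0 < lam -> is_sol N lam w w1 ->
  0 <= a <= b -> b <= 1 -> flux N w1 a <= flux N w1 b.
Proof.
  intros Hev Hl Hw Hab Hb.
  destruct (Req_dec a b) as [-> | Hne]; [lra |].
  destruct (sol_mvt_flux N lam w w1 Hw a b ltac:(lra) ltac:(lra) Hb) as [xi [Hxi Hmvt]].
  assert (0 <= source N lam w xi)
    by (apply source_nonneg; [lra | lra | apply pow_even_nonneg, Hev]).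
  assert (0 <= source N lam w xi * (b - a)) by (apply Rmult_le_pos; lra).
  lra.
Qed.

(* A solution with w(0) > 0 = w(1) is strictly decreasing near 0: w1 < 0 on
   some (0,b].  On a neighbourhood where w > 0 the flux is positive, so w1
   has a constant sign there; a positive sign is impossible for odd N, and
   for even N the monotone flux would keep w1 > 0 up to 1, contradicting
   w(1) < w(0). *)
Lemma sol_decreasing_near0 N lam w w1 : (1 <= N)%nat -> 0 < lam -> is_sol N lam w w1 ->
  0 < w 0 -> w 1 = 0 -> exists b, 0 < b <= 1 /\ forall r, 0 < r <= b -> 0 < - w1 r.
Proof.
  intros HN Hl Hw Hw0 Hw1.
  destruct (sol_cont N lam w w1 Hw 0 ltac:(lra) (w 0 / 2) ltac:(lra)) as [d [Hd Hd']].
  set (b := Rmin 1 (d / 2)).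
  assert (Hb : 0 < b <= 1 /\ b <= d / 2)
    by (unfold b; split; [split; [apply Rmin_pos; lra | apply Rmin_l] | apply Rmin_r]).
  assert (Hwpos : forall x, 0 <= x <= b -> 0 < w x).
  { intros x Hx. assert (Rabs (w x - w 0) < w 0 / 2)
      by (apply Hd'; [lra | rewrite Rminus_0_r, Rabs_right; lra]).
    unfold Rabs in H; destruct Rcase_abs in H; lra. }
  assert (Hflux : forall r, 0 < r <= b -> 0 < flux N w1 r)
    by (intros r Hr; apply (sol_flux_pos N lam w w1 r HN Hl Hw); [lra | intros; apply Hwpos; lra]).
  assert (Hnz : forall r, 0 < r <= b -> w1 r <> 0)
    by (intros r Hr; apply (flux_pos_neq0 N _ _ HN), Hflux, Hr).
  pose proof (sign_constant w1 b (proj1 Hb) (sol_cont_der N lam w w1 Hw) Hnz) as Hsign.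
  destruct (Rlt_le_dec (w1 b) 0) as [Hneg | Hpos].
  { exists b; split; [lra |]. intros r Hr.
    specialize (Hsign r b Hr ltac:(lra)). nra. }
  exfalso.
  assert (Hpos' : 0 < w1 b) by (destruct Hpos; [assumption | exfalso; apply (Hnz b); lra]).
  pose proof (Hflux b ltac:(lra)) as Hfb.
  destruct (Nat.Even_or_Odd N) as [Hev | Hod].
  - assert (Hnz1 : forall r, 0 < r <= 1 -> w1 r <> 0).
    { intros r Hr. destruct (Rle_lt_dec r b); [apply Hnz; lra |].
      apply (flux_pos_neq0 N _ _ HN).
      pose proof (sol_flux_mono_even N lam w w1 b r Hev Hl Hw ltac:(lra) ltac:(lra)). lra. }
    destruct (sol_mvt N lam w w1 Hw 0 1 ltac:(lra) ltac:(lra) ltac:(lra)) as [xi [Hxi Hmvt]].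
    pose proof (sign_constant w1 1 ltac:(lra) (sol_cont_der N lam w w1 Hw) Hnz1 xi b
      ltac:(lra) ltac:(lra)).
    assert (0 < w1 xi) by nra.
    rewrite Hw1 in Hmvt. nra.
  - unfold flux in Hfb. pose proof (pow_odd_neg (- w1 b) N Hod ltac:(lra)). lra.
Qed.

(* A solution with w(0) > 0 = w(1) that is positive on (0,1) is strictly
   decreasing on (0,1]: its flux is positive there, so w1 has no zero and
   keeps the sign it has near 0. *)
Lemma sol_decreasing N lam w w1 : (1 <= N)%nat -> 0 < lam -> is_sol N lam w w1 ->
  0 < w 0 -> w 1 = 0 -> (forall x, 0 < x < 1 -> 0 < w x) ->
  forall r, 0 < r <= 1 -> 0 < - w1 r.
Proof.
  intros HN Hl Hw Hw0 Hw1 Hpos r Hr.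
  destruct (sol_decreasing_near0 N lam w w1 HN Hl Hw Hw0 Hw1) as [b [Hb Hnear]].
  assert (Hnz : forall x, 0 < x <= 1 -> w1 x <> 0).
  { intros x Hx. apply (flux_pos_neq0 N _ _ HN), (sol_flux_pos N lam w w1 x HN Hl Hw Hx).
    intros; apply Hpos; lra. }
  pose proof (sign_constant w1 1 ltac:(lra) (sol_cont_der N lam w w1 Hw) Hnz r b Hr ltac:(lra)).
  specialize (Hnear b ltac:(lra)). nra.
Qed.

(* -g(x) >= k x on a right neighbourhood of t in [0,1]: the lower bound on
   -w1 needed to invert the flux in the uniqueness argument. *)
Definition lin_lower_bound (g : R -> R) (t : R) : Prop :=
  exists k d, 0 < k /\ 0 < d /\ forall x, t < x <= t + d -> x <= 1 -> k * x <= - g x.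

Lemma lin_lower_bound_both f g t : 0 <= t -> lin_lower_bound f t -> lin_lower_bound g t ->
  exists k d, 0 < k /\ 0 < d /\
    forall x, t < x <= t + d -> x <= 1 -> k * x <= - f x /\ k * x <= - g x.
Proof.
  intros Ht [k1 [d1 [Hk1 [Hd1 H1]]]] [k2 [d2 [Hk2 [Hd2 H2]]]].
  exists (Rmin k1 k2), (Rmin d1 d2).
  pose proof (Rmin_l k1 k2); pose proof (Rmin_r k1 k2).
  pose proof (Rmin_l d1 d2); pose proof (Rmin_r d1 d2).
  split; [apply Rmin_pos; lra |]. split; [apply Rmin_pos; lra |].
  intros x Hx Hx1. pose proof (H1 x ltac:(lra) Hx1). pose proof (H2 x ltac:(lra) Hx1).
  split; nra.
Qed.

(* Near 0: if k <= mu w on [0,d], comparing the flux with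
   (k r)^N, whose derivative is dominated by the source, gives
   (k r)^N <= flux(r). *)
Lemma flux_lower_near0 N mu w w1 k d : (1 <= N)%nat -> 0 < mu -> is_sol N mu w w1 ->
  0 < d <= 1 -> 0 <= k -> (forall x, 0 <= x <= d -> k <= mu * w x) ->
  forall r, 0 <= r <= d -> (k * r) ^ N <= flux N w1 r.
Proof.
  intros HN Hmu Hw Hd Hk Hkw r Hr.
  destruct (Req_dec r 0) as [-> | Hne].
  { unfold flux. rewrite Rmult_0_r, (sol_der0 _ _ _ _ Hw), Ropp_0. lra. }
  destruct (mvt01 (fun s => flux N w1 s - k ^ N * s ^ N)
    (fun s => source N mu w s - k ^ N * (INR N * s ^ Nat.pred N)) 0 r
    ltac:(lra) ltac:(lra) ltac:(lra)) as [xi [Hxi Hmvt]].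
  { intros x Hx. apply (derivable_pt_lim_minus (flux N w1) (fun s => k ^ N * s ^ N)).
    - apply (sol_deriv_flux N mu w w1 Hw); lra.
    - apply (derivable_pt_lim_scal (fun s => s ^ N)), derivable_pt_lim_pow. }
  { intros x Hx. apply cont01_minus; [lra | apply (sol_cont_flux N mu w w1 Hw); lra |].
    apply (cont01_comp (fun y => k ^ N * y ^ N) (fun s => s) x ltac:(lra)); [| apply cont01_id].
    intro y. apply (continuity_pt_scal (fun y => y ^ N)), derivable_continuous, derivable_pow. }
  unfold flux at 2 in Hmvt.
  rewrite (sol_der0 _ _ _ _ Hw), Ropp_0, !pow0_pos_exp, <- Nat.sub_1_r in Hmvt by exact HN.
  assert (Hmw : k ^ N <= (mu * w xi) ^ N) by (apply pow_incr; split; [lra | apply Hkw; lra]).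
  rewrite Rpow_mult_distr in Hmw.
  assert (0 <= INR N * xi ^ (N - 1))
    by (apply Rmult_le_pos; [apply pos_INR | apply pow_le; lra]).
  assert (Hder : 0 <= source N mu w xi - k ^ N * (INR N * xi ^ (N - 1))).
  { unfold source.
    replace (mu ^ N * INR N * xi ^ (N - 1) * w xi ^ N - k ^ N * (INR N * xi ^ (N - 1)))
      with ((INR N * xi ^ (N - 1)) * (mu ^ N * w xi ^ N - k ^ N)) by ring.
    apply Rmult_le_pos; lra. }
  rewrite Rpow_mult_distr.
  assert (0 <= (source N mu w xi - k ^ N * (INR N * xi ^ (N - 1))) * (r - 0))
    by (apply Rmult_le_pos; lra).
  lra.
Qed.

Lemma sol_linear_lower_bound0 N mu w w1 : (1 <= N)%nat -> 0 < mu -> is_sol N mu w w1 ->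
  0 < w 0 -> (exists b, 0 < b <= 1 /\ forall r, 0 < r <= b -> 0 < - w1 r) ->
  lin_lower_bound w1 0.
Proof.
  intros HN Hmu Hw Hw0 [b [Hb Hneg]].
  destruct (sol_cont N mu w w1 Hw 0 ltac:(lra) (w 0 / 2) ltac:(lra)) as [d1 [Hd1 Hd1']].
  set (d := Rmin b (d1 / 2)).
  assert (Hd : 0 < d <= b /\ d <= d1 / 2)
    by (unfold d; split; [split; [apply Rmin_pos; lra | apply Rmin_l] | apply Rmin_r]).
  set (k := mu * w 0 / 2).
  assert (Hk : 0 < k) by (unfold k; nra).
  assert (Hkw : forall x, 0 <= x <= d -> k <= mu * w x).
  { intros x Hx. assert (Rabs (w x - w 0) < w 0 / 2)
      by (apply Hd1'; [lra | rewrite Rminus_0_r, Rabs_right; lra]).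
    unfold Rabs in H; destruct Rcase_abs in H; unfold k; nra. }
  exists k, d. split; [exact Hk |]. split; [lra |]. intros x Hx _.
  apply (pow_le_root _ _ N); [nra | pose proof (Hneg x ltac:(lra)); lra | exact HN |].
  apply (flux_lower_near0 N mu w w1 k d HN Hmu Hw ltac:(lra) ltac:(lra) Hkw); lra.
Qed.

Lemma lin_lower_bound_of_neg g t : 0 <= t <= 1 -> cont01_at g t -> g t < 0 ->
  lin_lower_bound g t.
Proof.
  intros Ht Hc Hneg.
  destruct (Hc (- g t / 2) ltac:(lra)) as [d [Hd Hd']].
  exists (- g t / 2), (d / 2). split; [lra |]. split; [lra |]. intros x Hx Hx1.
  assert (Rabs (g x - g t) < - g t / 2)
    by (apply Hd'; [lra | rewrite Rabs_right; lra]).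
  unfold Rabs in H; destruct Rcase_abs in H; nra.
Qed.

Lemma source_diff_le N mu w u x M E : 0 <= mu -> 0 <= x ->
  Rabs (w x) <= M -> Rabs (u x) <= M -> Rabs (w x - u x) <= E ->
  Rabs (source N mu w x - source N mu u x)
    <= mu ^ N * INR N * (INR N * M ^ (N - 1)) * x ^ (N - 1) * E.
Proof.
  intros Hmu Hx Hw Hu HE. unfold source.
  replace (mu ^ N * INR N * x ^ (N - 1) * w x ^ N - mu ^ N * INR N * x ^ (N - 1) * u x ^ N)
    with (mu ^ N * INR N * x ^ (N - 1) * (w x ^ N - u x ^ N)) by ring.
  assert (Hc : 0 <= mu ^ N * INR N * x ^ (N - 1))
    by (repeat apply Rmult_le_pos; try apply pow_le; try apply pos_INR; lra).
  rewrite Rabs_mult, (Rabs_right (mu ^ N * INR N * x ^ (N - 1))) by lra.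
  pose proof (pow_diff_upper N _ _ M Hw Hu).
  assert (0 <= INR N * M ^ (N - 1))
    by (apply Rmult_le_pos; [apply pos_INR | apply pow_le; pose proof (Rabs_pos (w x)); lra]).
  replace (mu ^ N * INR N * (INR N * M ^ (N - 1)) * x ^ (N - 1) * E)
    with (mu ^ N * INR N * x ^ (N - 1) * (INR N * M ^ (N - 1) * E)) by ring.
  apply Rmult_le_compat_l; [exact Hc |]. nra.
Qed.

Lemma flux_diff_upper N mu u u1 w w1 t y M E :
  0 < mu -> is_sol N mu u u1 -> is_sol N mu w w1 -> 0 <= t < y -> y <= 1 -> w1 t = u1 t ->
  (forall z, t <= z <= y -> Rabs (w z) <= M /\ Rabs (u z) <= M /\ Rabs (w z - u z) <= E) ->
  Rabs (flux N w1 y - flux N u1 y)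
    <= mu ^ N * INR N * (INR N * M ^ (N - 1)) * y ^ (N - 1) * E * (y - t).
Proof.
  intros Hmu Hu Hw Ht Hy Hw1t Hbound.
  destruct (mvt01 (fun s => flux N w1 s - flux N u1 s)
    (fun s => source N mu w s - source N mu u s) t y ltac:(lra) ltac:(lra) Hy)
    as [xi [Hxi Hmvt]].
  { intros z Hz. apply derivable_pt_lim_minus;
      [apply (sol_deriv_flux N mu w w1 Hw) | apply (sol_deriv_flux N mu u u1 Hu)]; lra. }
  { intros z Hz. apply cont01_minus;
      [lra | apply (sol_cont_flux N mu w w1 Hw) | apply (sol_cont_flux N mu u u1 Hu)]; lra. }
  unfold flux at 3 4 in Hmvt. rewrite Hw1t, Rminus_diag, Rminus_0_r in Hmvt.
  rewrite Hmvt, Rabs_mult, (Rabs_right (y - t)) by lra.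
  apply Rmult_le_compat_r; [lra |].
  destruct (Hbound xi ltac:(lra)) as [Hwx [Hux HE]].
  eapply Rle_trans; [apply source_diff_le; eauto; lra |].
  assert (0 <= INR N * M ^ (N - 1) * E).
  { pose proof (Rabs_pos (w xi)). pose proof (Rabs_pos (w xi - u xi)).
    apply Rmult_le_pos; [apply Rmult_le_pos; [apply pos_INR | apply pow_le] |]; lra. }
  assert (xi ^ (N - 1) <= y ^ (N - 1)) by (apply pow_incr; lra).
  assert (0 <= mu ^ N * INR N) by (apply Rmult_le_pos; [apply pow_le; lra | apply pos_INR]).
  replace (mu ^ N * INR N * (INR N * M ^ (N - 1)) * xi ^ (N - 1) * E)
    with (mu ^ N * INR N * xi ^ (N - 1) * (INR N * M ^ (N - 1) * E)) by ring.
  replace (mu ^ N * INR N * (INR N * M ^ (N - 1)) * y ^ (N - 1) * E)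
    with (mu ^ N * INR N * y ^ (N - 1) * (INR N * M ^ (N - 1) * E)) by ring.
  apply Rmult_le_compat_r; [lra |]. apply Rmult_le_compat_l; lra.
Qed.

Lemma flux_diff_lower N w1 u1 k y : 0 <= k -> 0 <= y ->
  k * y <= - w1 y -> k * y <= - u1 y ->
  INR N * k ^ (N - 1) * y ^ (N - 1) * Rabs (w1 y - u1 y) <= Rabs (flux N w1 y - flux N u1 y).
Proof.
  intros Hk Hy Hw Hu. unfold flux.
  replace (w1 y - u1 y) with (- (- w1 y - - u1 y)) by ring. rewrite Rabs_Ropp.
  replace (INR N * k ^ (N - 1) * y ^ (N - 1)) with (INR N * (k * y) ^ (N - 1))
    by (rewrite Rpow_mult_distr; ring).
  apply pow_diff_lower; nra.
Qed.

(* Let two solutions for mu, bounded by M on [0,1], agree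
   with their derivatives at t and satisfy -w1, -u1 >= k x on (t,b].  With
   A = N k^(N-1), the two flux estimates give
   sup|w1 - u1| <= C (b - t) / A sup|w - u| on (t,b], so the contraction
   applies once 2 C (b - t)^2 <= A. *)
Lemma local_uniqueness N mu u u1 w w1 t b k M :
  (1 <= N)%nat -> 0 < mu -> is_sol N mu u u1 -> is_sol N mu w w1 ->
  0 <= t -> t < b -> b <= 1 -> 0 < k ->
  (forall y, 0 <= y <= 1 -> Rabs (w y) <= M /\ Rabs (u y) <= M) ->
  (forall x, t < x <= b -> k * x <= - w1 x /\ k * x <= - u1 x) ->
  2 * (mu ^ N * INR N * (INR N * M ^ (N - 1))) * (b - t) * (b - t) <= INR N * k ^ (N - 1) ->
  w t = u t -> w1 t = u1 t ->
  forall x, t <= x <= b -> w x = u x /\ w1 x = u1 x.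
Proof.
  intros HN Hmu Hu Hw Ht Htb Hb Hk HM Hlow Hsmall Hwt Hw1t x Hx.
  set (C := mu ^ N * INR N * (INR N * M ^ (N - 1))) in Hsmall.
  set (A := INR N * k ^ (N - 1)) in Hsmall.
  assert (HA : 0 < A) by (apply Rmult_lt_0_compat; [apply lt_0_INR; lia | apply pow_lt; lra]).
  assert (HM0 : 0 <= M) by (destruct (HM 0 ltac:(lra)) as [H _]; pose proof (Rabs_pos (w 0)); lra).
  assert (HC : 0 <= C) by (repeat apply Rmult_le_pos; try apply pow_le; try apply pos_INR; lra).
  cut ((fun s => w s - u s) x = 0 /\ (fun s => w1 s - u1 s) x = 0); [simpl; lra |].
  apply (contraction_vanish _ _ t b (C * (b - t) / A)); try lra.
  - replace (C * (b - t) / A * (b - t)) with (C * (b - t) * (b - t) / A) by (field; lra).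
    apply Rmult_le_reg_l with A; [lra |].
    replace (A * (C * (b - t) * (b - t) / A)) with (C * (b - t) * (b - t)) by (field; lra). lra.
  - intros y Hy. apply derivable_pt_lim_minus;
      [apply (sol_deriv N mu w w1 Hw) | apply (sol_deriv N mu u u1 Hu)]; lra.
  - intros y Hy. apply cont01_minus;
      [lra | apply (sol_cont N mu w w1 Hw) | apply (sol_cont N mu u u1 Hu)]; lra.
  - intros E HE Hsup y Hy.
    pose proof (flux_diff_upper N mu u u1 w w1 t y M E Hmu Hu Hw ltac:(lra) ltac:(lra) Hw1t
      ltac:(intros z Hz; pose proof (HM z ltac:(lra)); pose proof (Hsup z ltac:(lra)); tauto))
      as Hupper. fold C in Hupper.
    destruct (Hlow y ltac:(lra)) as [Hwy Huy].
    pose proof (flux_diff_lower N w1 u1 k y ltac:(lra) ltac:(lra) Hwy Huy) as Hlower.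
    fold A in Hlower.
    assert (Hy0 : 0 < y ^ (N - 1)) by (apply pow_lt; lra).
    assert (C * y ^ (N - 1) * E * (y - t) <= C * y ^ (N - 1) * E * (b - t))
      by (apply Rmult_le_compat_l; [apply Rmult_le_pos; [apply Rmult_le_pos |] |]; lra).
    apply Rmult_le_reg_l with (A * y ^ (N - 1)); [nra |].
    replace (A * y ^ (N - 1) * (C * (b - t) / A * E)) with (C * y ^ (N - 1) * E * (b - t))
      by (field; lra).
    lra.
Qed.

(* Uniqueness for the initial value problem: if u is decreasing on (0,1],
   w is decreasing near 0 and w(0) = u(0) > 0, then w = u on [0,1].  At each
   point of agreement both derivatives have a linear lower bound (near 0
   from the sign of w, u; elsewhere from u1 < 0), and local uniqueness
   propagates the agreement. *)
Lemma sol_unique N mu u u1 w w1 : (1 <= N)%nat -> 0 < mu ->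
  is_sol N mu u u1 -> is_sol N mu w w1 ->
  u 0 = w 0 -> 0 < u 0 -> (forall r, 0 < r <= 1 -> 0 < - u1 r) ->
  (exists b, 0 < b <= 1 /\ forall r, 0 < r <= b -> 0 < - w1 r) ->
  forall r, 0 <= r <= 1 -> w r = u r /\ w1 r = u1 r.
Proof.
  intros HN Hmu Hu Hw H0 Hu0 Hudec Hwdec.
  destruct (abs_max01 w 0 1 ltac:(lra) ltac:(lra) ltac:(lra) (sol_cont N mu w w1 Hw))
    as [m1 [_ Hm1]].
  destruct (abs_max01 u 0 1 ltac:(lra) ltac:(lra) ltac:(lra) (sol_cont N mu u u1 Hu))
    as [m2 [_ Hm2]].
  set (M := Rabs (w m1) + Rabs (u m2)).
  pose proof (Rabs_pos (w m1)); pose proof (Rabs_pos (u m2)).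
  assert (HM : forall y, 0 <= y <= 1 -> Rabs (w y) <= M /\ Rabs (u y) <= M)
    by (intros y Hy; pose proof (Hm1 y Hy); pose proof (Hm2 y Hy); unfold M; lra).
  apply (sol_agree N mu mu w w1 u u1 Hw Hu (eq_sym H0)).
  intros t Ht Hwt Hw1t.
  assert (Hlow : lin_lower_bound w1 t /\ lin_lower_bound u1 t).
  { destruct (Req_dec t 0) as [-> | Ht0].
    - split; [apply (sol_linear_lower_bound0 N mu w w1); auto; lra |].
      apply (sol_linear_lower_bound0 N mu u u1); auto.
      exists 1; split; [lra | exact Hudec].
    - pose proof (Hudec t ltac:(lra)).
      split; apply lin_lower_bound_of_neg; try lra;
        [apply (sol_cont_der N mu w w1 Hw) | apply (sol_cont_der N mu u u1 Hu)]; lra. }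
  destruct (lin_lower_bound_both w1 u1 t ltac:(lra) (proj1 Hlow) (proj2 Hlow))
    as [k [d [Hk [Hd Hkd]]]].
  set (C := mu ^ N * INR N * (INR N * M ^ (N - 1))).
  assert (HC : 0 <= C)
    by (repeat apply Rmult_le_pos; try apply pow_le; try apply pos_INR; unfold M; lra).
  set (A := INR N * k ^ (N - 1)).
  assert (HA : 0 < A) by (apply Rmult_lt_0_compat; [apply lt_0_INR; lia | apply pow_lt; lra]).
  destruct (small_length (2 * C) A ltac:(lra) HA) as [s0 [Hs0 HCs0]].
  exists (Rmin s0 d). pose proof (Rmin_l s0 d). pose proof (Rmin_r s0 d).
  split; [apply Rmin_pos; lra |]. intros r Hr Hr1.
  destruct (step_endpoint t (Rmin s0 d) r Ht ltac:(apply Rmin_pos; lra) Hr Hr1)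
    as [b [Hb [Hbt Hrb]]].
  apply (local_uniqueness N mu u u1 w w1 t b k M); auto; try lra.
  - intros x Hx. apply Hkd; lra.
  - fold C A.
    assert (2 * C * (b - t) <= A)
      by (apply Rle_trans with (2 * C * s0); [apply Rmult_le_compat_l |]; lra).
    apply Rle_trans with (A * (b - t)); [apply Rmult_le_compat_r | ]; nra.
Qed.

(* Zeros of a solution cannot be too close: if w(c) = 0 = w(1) with
   w1(c) <> 0, then lam^N N (1 - c) > 1/4.  Otherwise, with D = sup|w| and
   G = sup|w1| on [c,1], the flux varies by at most lam^N N D^N (1 - c)
   <= G^N / 4 there (as D <= G (1 - c)); since w1 vanishes between c and 1
   (Rolle), |w1(c)|^N <= G^N / 4 and G^N <= |w1(c)|^N + G^N / 4, forcing
   G = 0. *)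
Lemma zero_spacing N lam w w1 c : (1 <= N)%nat -> 0 < lam -> is_sol N lam w w1 ->
  0 < c < 1 -> w c = 0 -> w 1 = 0 -> w1 c <> 0 -> 1 / 4 < lam ^ N * INR N * (1 - c).
Proof.
  intros HN Hl Hw Hc Hwc Hw1 Hw1c.
  apply Rnot_le_lt. intro Hsmall.
  set (K := lam ^ N * INR N) in Hsmall.
  destruct (abs_max01 w c 1 ltac:(lra) ltac:(lra) ltac:(lra)) as [m [Hm HD]].
  { intros; apply (sol_cont N lam w w1 Hw); lra. }
  destruct (abs_max01 w1 c 1 ltac:(lra) ltac:(lra) ltac:(lra)) as [m' [Hm' HG]].
  { intros; apply (sol_cont_der N lam w w1 Hw); lra. }
  set (D := Rabs (w m)) in HD. set (G := Rabs (w1 m')) in HG.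
  assert (HDG : D <= G).
  { pose proof (sol_value_variation N lam w w1 c m G Hw ltac:(lra) ltac:(lra)
      ltac:(intros; apply HG; lra)) as H.
    rewrite Hwc, Rminus_0_r in H. fold D in H.
    assert (0 <= G) by apply Rabs_pos. nra. }
  assert (Hvar : forall r, c <= r <= 1 ->
    Rabs (flux N w1 r - flux N w1 c) <= G ^ N / 4).
  { intros r Hr.
    pose proof (sol_flux_variation N lam w w1 c r D ltac:(lra) Hw ltac:(lra) ltac:(lra)
      ltac:(intros; apply HD; lra)) as H. fold K in H.
    assert (HK : 0 <= K) by (unfold K; apply Rmult_le_pos; [apply pow_le; lra | apply pos_INR]).
    assert (D ^ N <= G ^ N) by (apply pow_incr; split; [apply Rabs_pos | exact HDG]).
    assert (0 <= D ^ N) by (apply pow_le, Rabs_pos).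
    assert (K * D ^ N * (r - c) <= (K * (1 - c)) * D ^ N)
      by (replace (K * (1 - c) * D ^ N) with (K * D ^ N * (1 - c)) by ring;
          apply Rmult_le_compat_l; [apply Rmult_le_pos |]; lra).
    assert ((K * (1 - c)) * D ^ N <= 1 / 4 * G ^ N)
      by (apply Rmult_le_compat; try lra; apply Rmult_le_pos; lra).
    lra. }
  destruct (sol_mvt N lam w w1 Hw c 1 ltac:(lra) ltac:(lra) ltac:(lra)) as [xi0 [Hxi0 Hrolle]].
  rewrite Hwc, Hw1 in Hrolle.
  assert (Hz : w1 xi0 = 0) by (destruct (Rmult_integral (w1 xi0) (1 - c)); lra).
  assert (Hvar_c : Rabs (w1 c) ^ N <= G ^ N / 4).
  { pose proof (Hvar xi0 ltac:(lra)) as H. unfold flux in H.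
    rewrite Hz, Ropp_0, pow0_pos_exp, Rminus_0_l, Rabs_Ropp, Rabs_opp_pow in H by exact HN.
    exact H. }
  assert (Hvar_G : G ^ N <= Rabs (w1 c) ^ N + G ^ N / 4).
  { pose proof (Hvar m' Hm') as H. unfold flux in H.
    pose proof (Rabs_triang_inv ((- w1 m') ^ N) ((- w1 c) ^ N)) as Htri.
    rewrite !Rabs_opp_pow in Htri. fold G in Htri. lra. }
  assert (0 < Rabs (w1 c) ^ N) by (apply pow_lt, Rabs_pos_lt, Hw1c).
  lra.
Qed.

Definition first_profile (N : nat) (lam1 : R) (v v1 : R -> R) : Prop :=
  is_sol N lam1 v v1 /\ 0 < v 0 /\ v 1 = 0 /\
  (forall r, 0 < r < 1 -> 0 < v r) /\ (forall r, 0 < r <= 1 -> 0 < - v1 r).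

(* v(0) >= 0 by continuity, and v(0) = 0 would make v vanish identically. *)
Lemma first_profile_of N lam1 : (1 <= N)%nat -> is_first_eigenvalue_B2 N lam1 ->
  exists v v1, first_profile N lam1 v v1.
Proof.
  intros HN [Hl1 [v [v1 [v2 [HC [HS Hpos]]]]]].
  pose proof (is_sol_of_B2 N lam1 v v1 v2 HC HS) as Hv.
  destruct HS as [_ [_ Hv1]].
  assert (Hv0 : 0 < v 0).
  { destruct (Rtotal_order (v 0) 0) as [Hneg | [Hz | Hp]]; [exfalso | exfalso | exact Hp].
    - destruct (sol_cont N lam1 v v1 Hv 0 ltac:(lra) (- v 0) ltac:(lra)) as [d [Hd Hd']].
      set (y := Rmin (1 / 2) (d / 2)).
      assert (Hy : 0 < y <= 1 / 2 /\ y <= d / 2)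
        by (unfold y; split; [split; [apply Rmin_pos; lra | apply Rmin_l] | apply Rmin_r]).
      assert (Rabs (v y - v 0) < - v 0) by (apply Hd'; [lra | rewrite Rminus_0_r, Rabs_right; lra]).
      pose proof (Hpos y ltac:(lra)). unfold Rabs in H; destruct Rcase_abs in H; lra.
    - destruct (sol_zero_data N lam1 v v1 HN ltac:(lra) Hv Hz (1 / 2) ltac:(lra)) as [H _].
      pose proof (Hpos (1 / 2) ltac:(lra)). lra. }
  exists v, v1. split; [exact Hv |]. split; [exact Hv0 |]. split; [exact Hv1 |].
  split; [exact Hpos |]. apply (sol_decreasing N lam1 v v1 HN Hl1 Hv Hv0 Hv1 Hpos).
Qed.

Lemma eigenfunction_normalised N lam alpha : (1 <= N)%nat -> is_eigenvalue_B2 N lam ->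
  0 < alpha -> exists w w1, is_sol N lam w w1 /\ w 0 = alpha /\ w 1 = 0 /\
    exists b, 0 < b <= 1 /\ forall r, 0 < r <= b -> 0 < - w1 r.
Proof.
  intros HN [Hl [w [w1 [w2 [HC [HS [r0 [Hr0 Hwr0]]]]]]]] Halpha.
  pose proof (is_sol_of_B2 N lam w w1 w2 HC HS) as Hw.
  destruct HS as [_ [_ Hw1]].
  assert (Hw0 : w 0 <> 0).
  { intro H. destruct (sol_zero_data N lam w w1 HN ltac:(lra) Hw H r0 Hr0). lra. }
  set (a := alpha / w 0).
  pose proof (sol_scale N lam w w1 a Hw) as Haw.
  assert (Ha0 : a * w 0 = alpha) by (unfold a; field; exact Hw0).
  assert (Ha1 : a * w 1 = 0) by (rewrite Hw1; ring).
  exists (fun x => a * w x), (fun x => a * w1 x).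
  split; [exact Haw |]. split; [exact Ha0 |]. split; [exact Ha1 |].
  apply (sol_decreasing_near0 N lam (fun x => a * w x) (fun x => a * w1 x)); auto; lra.
Qed.

Lemma sqrt_facts x : 0 < x < 1 -> 0 < sqrt x < 1 /\ sqrt x * sqrt x = x /\ x <= sqrt x.
Proof.
  intros Hx. pose proof (sqrt_lt_R0 x ltac:(lra)). pose proof (sqrt_sqrt x ltac:(lra)).
  assert (sqrt x < 1) by (destruct (Rlt_le_dec (sqrt x) 1); [assumption | nra]).
  split; [lra |]. split; [assumption | nra].
Qed.

Lemma ratio_in_01 a b : 0 < a < b -> 0 < a / b < 1.
Proof.
  intros H. split; [apply Rdiv_lt_0_compat; lra |].
  apply Rmult_lt_reg_l with b; [lra |].
  replace (b * (a / b)) with a by (field; lra). lra.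
Qed.

(* No eigenvalue lies below lam1: with c^2 = lam / lam1, the dilated first
   eigenfunction v(c .) and the normalised eigenfunction for lam solve the
   same initial value problem, hence coincide; but v(c) > 0 = w(1). *)
Lemma no_eigenvalue_below N lam1 v v1 lam : (1 <= N)%nat -> 0 < lam1 ->
  first_profile N lam1 v v1 -> is_eigenvalue_B2 N lam -> lam < lam1 -> False.
Proof.
  intros HN Hl1 [Hv [Hv0 [Hv1 [Hpos Hdec]]]] Heig Hlt.
  pose proof (proj1 Heig) as Hl.
  destruct (eigenfunction_normalised N lam (v 0) HN Heig Hv0) as [w [w1 [Hw [Hw0 [Hw1 Hwdec]]]]].
  destruct (sqrt_facts (lam / lam1) (ratio_in_01 lam lam1 ltac:(lra))) as [Hc [Hcc _]].
  set (c := sqrt (lam / lam1)) in *.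
  pose proof (sol_dilate N lam1 v v1 c ltac:(lra) Hv) as Hu.
  replace (c * c * lam1) with lam in Hu by (rewrite Hcc; field; lra).
  assert (Hudec : forall r, 0 < r <= 1 -> 0 < - (c * v1 (c * r)))
    by (intros r Hr; pose proof (Hdec (c * r) ltac:(nra)); nra).
  destruct (sol_unique N lam (fun r => v (c * r)) (fun r => c * v1 (c * r)) w w1 HN Hl Hu Hw
    ltac:(cbv beta; rewrite Rmult_0_r; lra) ltac:(cbv beta; rewrite Rmult_0_r; lra)
    Hudec Hwdec 1 ltac:(lra))
    as [Hw1c _].
  rewrite Hw1, Rmult_1_r in Hw1c. pose proof (Hpos c ltac:(lra)). lra.
Qed.

(* Above lam1, with c^2 = lam1 / lam, the dilated normalised eigenfunction
   w(c .) coincides with v; so w(c) = v(1) = 0 and w1(c) = v1(1) / c <> 0,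
   and the zero spacing estimate applies on [c,1]. *)
Lemma eigenvalue_above_gap N lam1 v v1 lam : (1 <= N)%nat -> 0 < lam1 ->
  first_profile N lam1 v v1 -> is_eigenvalue_B2 N lam -> lam1 < lam ->
  1 / 4 < lam ^ N * INR N * (1 - sqrt (lam1 / lam)).
Proof.
  intros HN Hl1 [Hv [Hv0 [Hv1 [Hpos Hdec]]]] Heig Hgt.
  pose proof (proj1 Heig) as Hl.
  destruct (eigenfunction_normalised N lam (v 0) HN Heig Hv0)
    as [w [w1 [Hw [Hw0 [Hw1 [b [Hb Hwdec]]]]]]].
  destruct (sqrt_facts (lam1 / lam) (ratio_in_01 lam1 lam ltac:(lra))) as [Hc [Hcc _]].
  set (c := sqrt (lam1 / lam)) in *.
  pose proof (sol_dilate N lam w w1 c ltac:(lra) Hw) as Ht.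
  replace (c * c * lam) with lam1 in Ht by (rewrite Hcc; field; lra).
  assert (Htdec : exists b', 0 < b' <= 1 /\ forall r, 0 < r <= b' -> 0 < - (c * w1 (c * r))).
  { exists b. split; [exact Hb |]. intros r Hr.
    pose proof (Hwdec (c * r) ltac:(split; nra)). nra. }
  destruct (sol_unique N lam1 v v1 (fun r => w (c * r)) (fun r => c * w1 (c * r)) HN Hl1 Hv Ht
    ltac:(cbv beta; rewrite Rmult_0_r; lra) Hv0 Hdec Htdec 1 ltac:(lra)) as [Hwc Hw1c].
  rewrite Rmult_1_r in Hwc, Hw1c.
  apply (zero_spacing N lam w w1 c HN Hl Hw Hc); [lra | exact Hw1 |].
  intro Hz. pose proof (Hdec 1 ltac:(lra)). rewrite Hz, Rmult_0_r in Hw1c. lra.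
Qed.

(* Slightly above lam1 the quantity in the zero spacing estimate is small:
   1 - sqrt (lam1 / lam) <= 1 - lam1 / lam, and lam^N stays bounded. *)
Lemma spacing_small_near N lam1 : 0 < lam1 -> exists delta, lam1 < delta /\
  forall lam, lam1 < lam < delta -> lam ^ N * INR N * (1 - sqrt (lam1 / lam)) <= 1 / 4.
Proof.
  intros Hl1.
  set (K := (2 * lam1) ^ N * INR N).
  assert (HK : 0 <= K) by (unfold K; apply Rmult_le_pos; [apply pow_le; lra | apply pos_INR]).
  set (eta := 1 / (4 * K + 2)).
  assert (Heta : 0 < eta <= 1 / 2 /\ K * eta <= 1 / 4).
  { unfold eta. repeat split; [apply Rdiv_lt_0_compat; lra | |];
      apply Rmult_le_reg_l with (4 * (4 * K + 2)); try lra;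
      field_simplify; lra. }
  exists (lam1 / (1 - eta)). split.
  { apply Rmult_lt_reg_l with (1 - eta); [lra |].
    replace ((1 - eta) * (lam1 / (1 - eta))) with lam1 by (field; lra). nra. }
  intros lam [Hlo Hhi].
  assert (Hhi' : lam * (1 - eta) < lam1).
  { apply Rlt_le_trans with (lam1 / (1 - eta) * (1 - eta)); [apply Rmult_lt_compat_r; lra |].
    right; field; lra. }
  destruct (sqrt_facts (lam1 / lam) (ratio_in_01 lam1 lam ltac:(lra))) as [Hsq1 [_ Hsq]].
  assert (Hgap : 1 - sqrt (lam1 / lam) <= eta).
  { assert (1 - eta < lam1 / lam); [| lra].
    apply Rmult_lt_reg_l with lam; [lra |].
    replace (lam * (lam1 / lam)) with lam1 by (field; lra). lra. }
  assert (lam ^ N <= (2 * lam1) ^ N) by (apply pow_incr; nra).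
  assert (0 <= 1 - sqrt (lam1 / lam)) by lra.
  apply Rle_trans with (K * eta); [| lra].
  unfold K. apply Rmult_le_compat; try lra.
  - apply Rmult_le_pos; [apply pow_le | apply pos_INR]; lra.
  - apply Rmult_le_compat_r; [apply pos_INR | lra].
Qed.

Lemma first_is_eigenvalue N lam1 : is_first_eigenvalue_B2 N lam1 -> is_eigenvalue_B2 N lam1.
Proof.
  intros [Hl1 [v [v1 [v2 [HC [HS Hpos]]]]]].
  split; [exact Hl1 |]. exists v, v1, v2. split; [exact HC |]. split; [exact HS |].
  exists (1 / 2). split; [lra |]. pose proof (Hpos (1 / 2) ltac:(lra)). lra.
Qed.

Theorem lemma3p3 (N : nat) (lam1 : R) :
  (1 <= N)%nat ->
  is_first_eigenvalue_B2 N lam1 ->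
  exists delta : R, lam1 < delta /\
    is_eigenvalue_B2 N lam1 /\
    forall lam : R, 0 < lam < delta -> is_eigenvalue_B2 N lam -> lam = lam1.
Proof.
  intros HN Hfirst.
  pose proof (proj1 Hfirst) as Hl1.
  destruct (first_profile_of N lam1 HN Hfirst) as [v [v1 Hv]].
  destruct (spacing_small_near N lam1 Hl1) as [delta [Hdelta Hsmall]].
  exists delta. split; [exact Hdelta |]. split; [exact (first_is_eigenvalue N lam1 Hfirst) |].
  intros lam [Hlam Hlam_delta] Heig.
  destruct (total_order_T lam lam1) as [[Hlt | Heq] | Hgt]; [exfalso | exact Heq | exfalso].
  - exact (no_eigenvalue_below N lam1 v v1 lam HN Hl1 Hv Heig Hlt).
  - pose proof (eigenvalue_above_gap N lam1 v v1 lam HN Hl1 Hv Heig Hgt).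
    pose proof (Hsmall lam ltac:(lra)). lra.
Qed.
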